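(* Let $\mathbb F$ be an algebraically closed field of characteristic zero, $\mathbf n=(n_1,\dots,n_k)$, $\mathbf d=(d_1,\dots,d_k)$ tuples of positive integers, $d=d_1+\cdots+d_k$. For every nonzero linear map $\phi:V(\mathbf n,\mathbf d)\to M_{p,q}$ (matrix-rank method with simples $S(\mathbf n,\mathbf d)$), $$\mathrm{Pot}(\phi)\le Y_{\mathbf n,\mathbf d}+Z_{\mathbf n,\mathbf d},$$ where, with variables $\mathbf z=(\mathbf z_1,\dots,\mathbf z_k)$, $\mathbf z_i=(z_{i1},\dots,z_{in_i})$, $Y_{\mathbf n,\mathbf d}$ is the number of monomials in $\mathbf z$ with set multi-degree $\preceq\mathbf d$ and total degree $\le\lfloor d/2\rfloor$, and $Z_{\mathbf n,\mathbf d}$ is the number of monomials in $\mathbf z$ with set multi-degree $\preceq\mathbf d$ and total degree $\le d-(\lfloor d/2\rfloor+1)$.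
   Context: $P(N,e)$: homogeneous degree-$e$ polynomials in $N$ variables. $V(\mathbf n,\mathbf d)=P(n_1+1,d_1)\otimes\cdots\otimes P(n_k+1,d_k)$ and $S(\mathbf n,\mathbf d)=\{\ell_1^{d_1}\otimes\cdots\otimes\ell_k^{d_k}:\ell_i\in P(n_i+1,1)\}$. The set multi-degree of the monomial $\prod_{i,j}z_{ij}^{e_{ij}}$ is $(\sum_je_{1j},\dots,\sum_je_{kj})\in\mathbb N^k$; $\preceq$ is the componentwise order on $\mathbb N^k$. For linear $\phi:V\to M_{p,q}$ and spanning $S$, $\mu_\phi(v)=\mathrm{rank}(\phi(v))$, $\mu_\phi(X)=\max_{x\in X}\mu_\phi(x)$, $\mathrm{Pot}(\phi)=\mu_\phi(V)/\mu_\phi(S)$. *)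

From HB Require Import structures.
From mathcomp Require Import all_boot all_order all_algebra.
From Stdlib Require Import ClassicalEpsilon.
Set Implicit Arguments. Unset Strict Implicit. Unset Printing Implicit Defensive.
Import Order.TTheory GRing.Theory Num.Theory.

Definition pb (P : Prop) : bool :=
  if excluded_middle_informative P then true else false.

(* bounds used to encode exponent vectors in a single finite type *)
Definition mmax k (n : 'I_k -> nat) : nat := \max_(i < k) n i.

Definition Expo k (n d : 'I_k -> nat) :=
  {ffun 'I_k -> {ffun 'I_(mmax n).+1 -> 'I_(mmax d).+1}}.

(* Exponents of the monomial basis of P(n_1+1,d_1) (x) ... (x) P(n_k+1,d_k):
   for each i, variables x_{i0},...,x_{i n_i}, total degree exactly d_i. *)
Definition valid_expo k (n d : 'I_k -> nat) (e : Expo n d) : bool :=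
  [forall i, [forall j : 'I_(mmax n).+1, (n i < j) ==> ((e i j : nat) == 0)]]
  && [forall i, (\sum_(j < (mmax n).+1) (e i j : nat)) == d i].

Definition Basis k (n d : 'I_k -> nat) := {e : Expo n d | valid_expo e}.

(* V(n,d), in coordinates w.r.t. the monomial basis (tensor products of
   monomials). *)
(* F^o is F regarded as a left module over itself, so that V gets its
   canonical F-vector-space (lmodType F) structure. *)
Notation V F n d := {ffun Basis n d -> F^o}.

Definition multinom (D : nat) m (alpha : 'I_m -> nat) : nat :=
  D`! %/ \prod_(j < m) (alpha j)`!.

(* The simple tensor l_1^{d_1} (x) ... (x) l_k^{d_k}, where
   l_i = sum_{j <= n_i} a i j * x_{ij}; its coordinates are given by the
   multinomial theorem. (Coefficients a i j for j > n_i are irrelevant.) *)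
Definition simple (F : fieldType) k (n d : 'I_k -> nat)
  (a : 'I_k -> 'I_(mmax n).+1 -> F) : V F n d :=
  [ffun b : Basis n d =>
     (\prod_(i < k)
       ((multinom (d i) (fun j => (val b i j : nat)))%:R
        * \prod_(j < (mmax n).+1) a i j ^+ (val b i j)))%R].

Definition Sset (F : fieldType) k (n d : 'I_k -> nat) (v : V F n d) : Prop :=
  exists a : 'I_k -> 'I_(mmax n).+1 -> F, v = @simple F k n d a.

Definition mu (F : fieldType) (W : Type) p q (phi : W -> 'M[F]_(p, q))
  (X : W -> Prop) : nat :=
  \max_(r < p.+1 | pb (exists x, X x /\ \rank (phi x) = r)) (r : nat).

Definition Pot (F : fieldType) k (n d : 'I_k -> nat) p q
  (phi : V F n d -> 'M[F]_(p, q)) : rat :=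
  (((mu phi (fun _ => True))%:R / (mu phi (@Sset F k n d))%:R)%R : rat).

(* Since
   e_{ij} <= d_i <= max d, every such monomial is encoded in Expo n d. *)
Definition monoCount k (n d : 'I_k -> nat) (P : nat -> bool) : nat :=
  #|[set e : Expo n d |
      [forall i, [forall j : 'I_(mmax n).+1, (n i <= j) ==> ((e i j : nat) == 0)]]
      && [forall i, (\sum_(j < (mmax n).+1) (e i j : nat)) <= d i]
      && P (\sum_(i < k) \sum_(j < (mmax n).+1) (e i j : nat))]|.

Definition dsum k (d : 'I_k -> nat) := \sum_(i < k) d i.

Definition Ynd k (n d : 'I_k -> nat) :=
  monoCount n d (fun t => t <= (dsum d)./2).

(* Z: total degree <= d - (floor(d/2) + 1)  (no truncated subtraction) *)
Definition Znd k (n d : 'I_k -> nat) :=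
  monoCount n d (fun t => t + ((dsum d)./2).+1 <= dsum d).

(* Let r = mu(S), attained at a simple tensor a1, and choose L, R with
   L phi(a1) R = 1; perturb a1 into a point a0 of the affine chart with
   det (L phi(a0) R) <> 0.  Let U be spanned by the columns of phi(D^g a0) R
   for |g| <= floor(d/2) and W by the rows of L phi(D^g a0) for
   |g| <= d - floor(d/2) - 1, where D^g a0 are the Taylor coefficients of
   the simple map at a0.  If u is orthogonal to U and w to W, then
   f(t) = u phi(a0 + t s) w^T vanishes for every direction s of the chart:
   since rank phi(a0 + t s) <= r, det C(t) f(t) = A(t) adj C(t) B(t) with
   C(t) = L phi(a0 + t s) R, where A = u phi(.) R vanishes to order
   floor(d/2) + 1 and B = L phi(.) w^T to order d - floor(d/2) at t = 0;
   as det C(0) <> 0 and deg f <= d, f = 0.  The simples of the chart are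
   multiples of such a0 + s and span V, so the form u phi(v) w^T vanishes
   identically, whence rank phi(v) <= dim U + dim W <= (Y + Z) r. *)

From HB Require Import structures.
From mathcomp Require Import all_boot all_order all_algebra.
From mathcomp Require Import zify.
From Stdlib Require Import ClassicalEpsilon.
Import Order.TTheory GRing.Theory Num.Theory.
Set Implicit Arguments. Unset Strict Implicit. Unset Printing Implicit Defensive.
Local Open Scope ring_scope.

Lemma closed_poly_eq0 (F : closedFieldType) (p : {poly F}) :
  (forall x, p.[x] = 0) -> p = 0.
Proof.
by move=> p0; apply/eqP; apply: contraT => /closed_nonrootP [x]; rewrite /root p0 eqxx.
Qed.

Lemma dvdp_sum (F : fieldType) (I : finType) (P : pred I) (p : {poly F})
  (f : I -> {poly F}) :
  (forall i, P i -> p %| f i) -> p %| \sum_(i | P i) f i.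
Proof.
by move=> pf; apply: (big_ind (dvdp p)); [rewrite dvdp0 | exact: dvdp_add | exact: pf].
Qed.

Lemma dvdp_Xn_coef0 (F : fieldType) N (p : {poly F}) :
  (forall e, (e < N)%N -> p`_e = 0) -> 'X^N %| p.
Proof.
move=> p_lo; rewrite -(poly_take_drop N p) (_ : take_poly N p = 0) ?add0r ?dvdp_mull //.
by apply/polyP => e; rewrite coef0 coef_take_poly; case: ifP => // /p_lo.
Qed.

Lemma dvdp_Xn_mul_eq0 (F : fieldType) N (c g : {poly F}) :
  c.[0] != 0 -> 'X^N %| c * g -> (size g <= N)%N -> g = 0.
Proof.
move=> c0 dvd_cg size_g; apply/eqP; apply: contraT => g_neq0.
have cop : coprimep 'X^N c.
  apply: coprimep_expl; rewrite coprimep_sym -[X in coprimep _ X]subr0 -polyC0.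
  by rewrite coprimep_XsubC; apply/rootP/eqP.
rewrite Gauss_dvdpr // in dvd_cg.
by have := dvdp_leq g_neq0 dvd_cg; rewrite size_polyXn ltnNge size_g.
Qed.

Lemma exprDn_widen (R : comPzRingType) (K b : nat) (x y : R) : (b < K)%N ->
  (x + y) ^+ b = \sum_(g < K) 'C(b, g)%:R * x ^+ (b - g) * y ^+ g.
Proof.
move=> b_lt_K; rewrite exprDn (big_ord_widen K (fun g => x ^+ (b - g) * y ^+ g *+ 'C(b, g)) b_lt_K).
rewrite big_mkcond; apply: eq_bigr => g _; case: ifP => g_le_b.
  by rewrite mulr_natl mulrnAl.
by rewrite bin_small ?mul0r ?mulr0 // ltnNge -ltnS g_le_b.
Qed.

Lemma sum_digits_lt (B N : nat) (c : 'I_N -> nat) :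
  (forall i, c i < B)%N -> (\sum_(i < N) c i * B ^ i < B ^ N)%N.
Proof.
elim: N c => [|N IH] c c_lt; first by rewrite big_ord0 expn0.
rewrite big_ord_recr /= expnS.
have IHc := IH (fun i => c (widen_ord (leqnSn N) i)) (fun i => c_lt _).
have c_max := c_lt ord_max; move: (B ^ N)%N (\sum_(i < N) _)%N IHc => BN S IHc; nia.
Qed.

Lemma sum_digits_inj (B N : nat) (c c' : 'I_N -> nat) :
  (forall i, c i < B)%N -> (forall i, c' i < B)%N ->
  (\sum_(i < N) c i * B ^ i = \sum_(i < N) c' i * B ^ i)%N -> c =1 c'.
Proof.
elim: N c c' => [|N IH] c c' c_lt c'_lt eq_sum i; first by case: i.
have sumE (f : 'I_N.+1 -> nat) : (\sum_(i < N.+1) f i * B ^ i =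
   f ord0 + B * \sum_(i < N) f (lift ord0 i) * B ^ i)%N.
  rewrite big_ord_recl expn0 muln1 big_distrr /=; congr (_ + _)%N.
  by apply: eq_bigr => j _; rewrite /bump /= add1n expnS mulnCA mulnA.
rewrite !sumE in eq_sum.
have B_gt0 : (0 < B)%N by apply: leq_ltn_trans (c_lt i).
have eq0 : c ord0 = c' ord0.
  have modB x y : ((x + B * y) %% B = x %% B)%N by rewrite mulnC addnC modnMDl.
  by have := congr1 (modn^~ B) eq_sum; rewrite /= !modB !modn_small.
rewrite eq0 in eq_sum; move/addnI/eqP: eq_sum; rewrite eqn_mul2l gtn_eqF //= => /eqP.
move/(IH _ _ (fun j => c_lt _) (fun j => c'_lt _)) => eq_lift.
by case: (unliftP ord0 i) => [j ->|->].
Qed.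

Lemma prod_fact_leq (N : nat) (al : 'I_N -> nat) :
  (\prod_(j < N) (al j)`! <= (\sum_(j < N) al j)`!)%N.
Proof.
elim: N al => [|N IH] al; first by rewrite !big_ord0.
rewrite !big_ord_recr /=; set S := (\sum_(i < N) _)%N; set x := al ord_max.
apply: (@leq_trans (S`! * x`!)); first by rewrite leq_mul2r IH orbT.
have := bin_fact (leq_addr x S); rewrite addKn => <-.
by rewrite leq_pmull // bin_gt0 leq_addr.
Qed.

Lemma multinom_gt0 (N : nat) (al : 'I_N -> nat) : (0 < multinom (\sum_(j < N) al j) al)%N.
Proof.
by rewrite divn_gt0 ?prod_fact_leq // prodn_gt0 // => j; rewrite fact_gt0.
Qed.

(** * Matrix rank *)

Lemma mxrank_sum_leq (F : fieldType) (I : finType) (P : pred I) m n (A : I -> 'M[F]_(m, n)) :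
  (\rank (\sum_(i | P i) <<A i>>)%MS <= \sum_(i | P i) \rank (A i))%N.
Proof.
apply: leq_trans ((mxrank_sum_leqif _).1) _ => /=.
by rewrite leq_eqVlt (eq_bigr _ (fun i _ => mxrank_gen _)) eqxx.
Qed.

Lemma submx_orth (F : fieldType) m1 m2 n (A : 'M[F]_(m1, n)) (B : 'M[F]_(m2, n)) (u : 'rV_n) :
  u *m B^T = 0 -> (A <= B)%MS -> u *m A^T = 0.
Proof. by move=> uB /submxP [D ->]; rewrite trmx_mul mulmxA uB mul0mx. Qed.

Lemma mxrank_leq_add_of_orthogonal (F : fieldType) p q m1 m2 (M : 'M[F]_(p, q))
  (U : 'M_(m1, p)) (W : 'M_(m2, q)) :
  (forall (u : 'rV_p) (w : 'rV_q), u *m U^T = 0 -> w *m W^T = 0 -> u *m M *m w^T = 0) ->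
  (\rank M <= \rank U + \rank W)%N.
Proof.
move=> orthM; set Ku := kermx U^T; set Kw := kermx W^T.
have Ku0 i : row i Ku *m U^T = 0 by rewrite -row_mul mulmx_ker row0.
have Kw0 j : row j Kw *m W^T = 0 by rewrite -row_mul mulmx_ker row0.
have KuM_Kw : Ku *m M *m Kw^T = 0.
  apply/row_matrixP => i; rewrite row0 !row_mul; apply: trmx_inj.
  apply/row_matrixP => j; rewrite trmx0 row0 trmx_mul trmxK row_mul -[row j Kw]trmxK.
  by rewrite -trmx_mul orthM ?trmx0 // -row_mul; exact: Ku0.
have rk_KuM : (\rank (Ku *m M) <= \rank W)%N.
  have /mxrankS : (Ku *m M <= kermx Kw^T)%MS by rewrite sub_kermx KuM_Kw.
  by rewrite !(mxrank_ker, mxrank_tr) subKn // rank_leq_col.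
have := mxrank_mul_min Ku M; rewrite mxrank_ker mxrank_tr.
have := rank_leq_col U; lia.
Qed.

Lemma exists_mxrank_id (F : fieldType) p q r (M : 'M[F]_(p, q)) :
  \rank M = r -> exists L : 'M_(r, p), exists R : 'M_(q, r), L *m M *m R = 1%:M.
Proof.
move=> rkM; have EM : M = col_ebase M *m pid_mx r *m row_ebase M by rewrite -rkM mulmx_ebase.
exists (pid_mx r *m invmx (col_ebase M)), (invmx (row_ebase M) *m pid_mx r).
rewrite {2}EM !mulmxA mulmxKV ?col_ebase_unit //.
rewrite -[_ *m row_ebase M *m _]mulmxA mulmxV ?row_ebase_unit // mulmx1.
rewrite mul_pid_mx minnn (minn_idPr _) -rkM ?rank_leq_row //.
by rewrite pid_mx_id ?pid_mx_1 // rank_leq_col.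
Qed.

(* If rank M <= r and the r x r minor C = L M R is invertible, the columns of
   M R already span the column space of M, whence M = M R C^-1 L M. *)
Lemma mxrank_leq_adj_factor (F : fieldType) p q r x y (M : 'M[F]_(p, q))
  (L : 'M_(r, p)) (R : 'M_(q, r)) (X : 'M_(x, p)) (Y : 'M_(q, y)) :
  (\rank M <= r)%N -> L *m M *m R \in unitmx ->
  X *m M *m R *m \adj (L *m M *m R) *m (L *m M *m Y)
    = \det (L *m M *m R) *: (X *m M *m Y).
Proof.
move=> rkM unitC; set C := L *m M *m R.
have sub_MR : ((M *m R)^T <= M^T)%MS by rewrite trmx_mul submxMl.
have [D MR_D] : exists D, M = M *m R *m D.
  have rk : (\rank M^T <= \rank (M *m R)^T)%N.
    by rewrite !mxrank_tr (leq_trans rkM) // -{1}(mxrank_unit unitC) /C -mulmxA mxrankM_maxr.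
  have /submxP [D' eqD'] : (M^T <= (M *m R)^T)%MS
    by rewrite -(mxrank_leqif_sup sub_MR).2 eqn_leq rk mxrankS.
  by exists D'^T; rewrite -{1}[M]trmxK eqD' trmx_mul trmxK.
have invC_LM : invmx C *m (L *m M) = D.
  have -> : L *m M = C *m D by rewrite {1}MR_D !mulmxA.
  by rewrite mulKmx.
have adjC : \adj C = \det C *: invmx C.
  by rewrite /invmx unitC scalerA mulrV ?scale1r // -unitmxE.
rewrite adjC -scalemxAr -scalemxAl; congr (_ *: _).
by rewrite -!mulmxA (mulmxA L) (mulmxA (invmx C)) invC_LM [in RHS]MR_D !mulmxA.
Qed.

Lemma map_mx_hornerC (F : fieldType) m n (M : 'M[F]_(m, n)) t :
  map_mx (horner_eval t) (map_mx polyC M) = M.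
Proof. by apply/matrixP => i j; rewrite !mxE /horner_eval hornerC. Qed.

(* Pointwise this is mxrank_leq_adj_factor wherever det C(t) <> 0; multiplying
   by the nonzero polynomial det C extends it to all t. *)
Lemma mxrank_leq_adj_factor_poly (F : closedFieldType) p q r x y (P : 'M[{poly F}]_(p, q))
  (L : 'M[F]_(r, p)) (R : 'M[F]_(q, r)) (X : 'M[F]_(x, p)) (Y : 'M[F]_(q, y)) :
  (forall t, \rank (map_mx (horner_eval t) P) <= r)%N ->
  let C := map_mx polyC L *m P *m map_mx polyC R in
  \det C != 0 ->
  \det C *: (map_mx polyC X *m P *m map_mx polyC Y)
    = map_mx polyC X *m P *m map_mx polyC R *m \adj C
        *m (map_mx polyC L *m P *m map_mx polyC Y).
Proof.
move=> rkP C detC_neq0; apply/matrixP => i j; apply: (mulfI detC_neq0).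
apply/eqP; rewrite -subr_eq0; apply/eqP; apply: closed_poly_eq0 => t.
have evE m n (A : 'M[{poly F}]_(m, n)) a b : (A a b).[t] = map_mx (horner_eval t) A a b.
  by rewrite mxE.
rewrite mxE hornerD hornerN !hornerM !evE -[(\det C).[t]]/(horner_eval t (\det C)).
rewrite -det_map_mx /C !map_mxM map_mx_adj !map_mxM !map_mx_hornerC.
set Pt := map_mx (horner_eval t) P.
have [->|Ct_neq0] := eqVneq (\det (L *m Pt *m R)) 0; first by rewrite !mul0r subr0.
rewrite mxrank_leq_adj_factor ?rkP ?unitmxE ?unitfE // [(_ *: (_ : 'M_(_, _))) _ _]mxE.
by rewrite subrr.
Qed.

Lemma mu_ge_rank (F : fieldType) (W : Type) p q (phi : W -> 'M[F]_(p, q)) (X : W -> Prop) x :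
  X x -> (\rank (phi x) <= mu phi X)%N.
Proof.
move=> Xx; have rk_lt : (\rank (phi x) < p.+1)%N by rewrite ltnS rank_leq_row.
apply: (@leq_bigmax_cond _ _ (fun r : 'I_p.+1 => (r : nat)) (Ordinal rk_lt)).
by rewrite /pb; case: excluded_middle_informative => // -[]; exists x.
Qed.

Lemma mu_attained (F : fieldType) (W : Type) p q (phi : W -> 'M[F]_(p, q)) (X : W -> Prop) :
  (exists x, X x) -> exists2 x, X x & \rank (phi x) = mu phi X.
Proof.
rewrite /mu => -[x Xx]; have rk_lt : (\rank (phi x) < p.+1)%N by rewrite ltnS rank_leq_row.
have : (0 < #|(fun r : 'I_p.+1 => pb (exists x, X x /\ \rank (phi x) = r))|)%N.
  apply/card_gt0P; exists (Ordinal rk_lt); rewrite /in_mem /= /pb.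
  by case: excluded_middle_informative => // -[]; exists x.
move/(eq_bigmax_cond (fun r : 'I_p.+1 => (r : nat))) => [r0 + ->].
by rewrite /in_mem /= /pb; case: excluded_middle_informative => // -[y [Xy rk_y]] _; exists y.
Qed.

(** * Simple tensors *)

Lemma scale_regularE (R : pzSemiRingType) (c x : R) : c *: (x : R^o) = c * x.
Proof. by []. Qed.

Section SimpleTensors.
Variables (F : fieldType) (k : nat) (n d : 'I_k -> nat).
Local Notation coords := ('I_k -> 'I_(mmax n).+1 -> F).

(* The affine chart x_(i, n_i) <> 0 of every factor P(n_i + 1, d_i). *)
Definition in_chart (a : coords) : Prop := forall i, a i (inord (n i)) != 0.

Lemma ltn_mmax i : (n i < (mmax n).+1)%N.
Proof. by rewrite ltnS; apply: (leq_bigmax i). Qed.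

Lemma basis_expo_out (b : Basis n d) i (j : 'I_(mmax n).+1) :
  (n i < j)%N -> (val b i j : nat) = 0%N.
Proof.
case: b => e /= /andP [/forallP /(_ i) /forallP /(_ j) /implyP e_out _].
by move/e_out/eqP.
Qed.

Lemma basis_expo_sum (b : Basis n d) i : (\sum_(j < (mmax n).+1) (val b i j : nat))%N = d i.
Proof. by case: b => e /= /andP [_ /forallP /(_ i) /eqP]. Qed.

Definition multinom_coef (b : Basis n d) : F :=
  \prod_(i < k) (multinom (d i) (fun j => (val b i j : nat)))%:R.

Lemma multinom_coef_neq0 (b : Basis n d) : [pchar F] =i pred0 -> multinom_coef b != 0.
Proof.
move=> charF0; rewrite prodf_seq_neq0; apply/allP => i _ /=.
by rewrite (pcharf0P F).1 // -lt0n -(basis_expo_sum b i) multinom_gt0.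
Qed.

Lemma simpleE (a : coords) b :
  simple d a b = multinom_coef b * \prod_(i < k) \prod_(j < (mmax n).+1) a i j ^+ val b i j.
Proof. by rewrite ffunE big_split. Qed.

Lemma eq_simple (a a' : coords) : (forall i j, a i j = a' i j) -> simple d a = simple d a'.
Proof.
move=> eq_a; apply/ffunP => b; rewrite !simpleE; congr (_ * _).
by apply: eq_bigr => i _; apply: eq_bigr => j _; rewrite eq_a.
Qed.

Definition expo_deg (g : Expo n d) : nat :=
  \sum_(i < k) \sum_(j < (mmax n).+1) (g i j : nat).

Definition expo_eval (s : coords) (g : Expo n d) : F :=
  \prod_(i < k) \prod_(j < (mmax n).+1) s i j ^+ g i j.

(* The coefficient of t^|g| s^g in the Taylor expansion of simple d (a + t s). *)
Definition simple_taylor (a : coords) (g : Expo n d) : V F n d :=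
  [ffun b => multinom_coef b * \prod_(i < k) \prod_(j < (mmax n).+1)
      ('C(val b i j, g i j)%:R * a i j ^+ (val b i j - g i j))].

Lemma simple_line (a s : coords) (t : F) :
  simple d (fun i j => a i j + t * s i j) =
  \sum_(g : Expo n d) (t ^+ expo_deg g * expo_eval s g) *: simple_taylor a g.
Proof.
apply/ffunP => b; rewrite simpleE sum_ffunE.
under eq_bigr => i _ do under eq_bigr => j _ do rewrite (exprDn_widen _ _ (ltn_ord (val b i j))).
under eq_bigr => i _ do rewrite bigA_distr_bigA /=.
rewrite bigA_distr_bigA /= mulr_sumr; apply: eq_bigr => g _.
rewrite !ffunE /expo_deg /expo_eval scale_regularE mulrCA; congr (_ * _).
rewrite -prodrXr -!big_split /=; apply: eq_bigr => i _.
by rewrite -prodrXr -!big_split /=; apply: eq_bigr => j _; rewrite exprMn mulrC.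
Qed.

Definition dehom_expo (g : Expo n d) : bool :=
  [forall i, [forall j : 'I_(mmax n).+1, (n i <= j)%N ==> ((g i j : nat) == 0%N)]]
  && [forall i, (\sum_(j < (mmax n).+1) (g i j : nat) <= d i)%N].

Lemma monoCountE (P : pred nat) :
  monoCount n d P = #|[set g : Expo n d | dehom_expo g && P (expo_deg g)]|.
Proof. by []. Qed.

Lemma dehom_expo_deg (g : Expo n d) : dehom_expo g -> (expo_deg g <= dsum d)%N.
Proof. by case/andP => _ /forallP g_le; apply: leq_sum => i _; apply: g_le. Qed.

Lemma simple_taylor_eq0 (a s : coords) (g : Expo n d) :
  (forall i, s i (inord (n i)) = 0) -> ~~ dehom_expo g ->
  expo_eval s g *: simple_taylor a g = 0.
Proof.
move=> s_last; rewrite negb_and => /orP [/forallPn [i /forallPn [j]] | /forallPn [i]].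
  rewrite negb_imply => /andP [n_le_j g_neq0].
  have [j_eq|j_neq] := eqVneq (j : nat) (n i).
    have j_last : j = inord (n i) by apply: val_inj; rewrite /= inordK ?ltn_mmax.
    rewrite j_last in g_neq0; rewrite /expo_eval (bigD1 i) //= (bigD1 (inord (n i))) //=.
    by rewrite s_last expr0n (negbTE g_neq0) mulr0n !mul0r scale0r.
  suff -> : simple_taylor a g = 0 by rewrite scaler0.
  apply/ffunP => b; rewrite !ffunE (bigD1 i) //= (bigD1 j) //= basis_expo_out.
    by rewrite bin0n (negbTE g_neq0) mulr0n !mul0r mulr0.
  by rewrite ltn_neqAle eq_sym j_neq.
rewrite -ltnNge => d_lt_g; suff -> : simple_taylor a g = 0 by rewrite scaler0.
apply/ffunP => b; rewrite !ffunE.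
have [j b_lt_g] : exists j : 'I_(mmax n).+1, (val b i j < g i j)%N.
  apply/existsP; apply: contraTT d_lt_g => /existsPn b_ge_g.
  by rewrite -leqNgt -(basis_expo_sum b i) leq_sum // => j _; rewrite leqNgt b_ge_g.
by rewrite (bigD1 i) //= (bigD1 j) //= bin_small // !mul0r !mulr0.
Qed.

Lemma simple_affine_rescale (a a0 : coords) :
  in_chart a -> in_chart a0 ->
  exists c : F, exists2 s : coords, (forall i, s i (inord (n i)) = 0) &
    simple d a = c *: simple d (fun i j => a0 i j + s i j).
Proof.
move=> a_last a0_last; pose lam i := a i (inord (n i)) / a0 i (inord (n i)).
pose s i j := if j == inord (n i) then 0 else a i j / lam i - a0 i j.
exists (\prod_(i < k) lam i ^+ d i), s => [i|]; first by rewrite /s eqxx.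
have lam_neq0 i : lam i != 0 by rewrite mulf_neq0 ?invr_eq0.
have aE i j : a i j = lam i * (a0 i j + s i j).
  rewrite /s; case: eqP => [->|_]; first by rewrite addr0 divfK.
  by rewrite addrC subrK mulrC divfK.
apply/ffunP => b; rewrite [in RHS]ffunE !simpleE scale_regularE mulrCA; congr (_ * _).
rewrite -big_split /=; apply: eq_bigr => i _.
by under eq_bigr => j _ do rewrite aE exprMn; rewrite big_split /= prodrXr basis_expo_sum.
Qed.

(* Kronecker substitution: a_ij = t ^ K ^ (m i + j) with K, m exceeding all
   exponents, so that the exponents of the monomials are distinct base-K numbers. *)
Definition kronecker_index (b : Basis n d) : nat :=
  \sum_(i < k) \sum_(j < (mmax n).+1) val b i j * (mmax d).+1 ^ ((mmax n).+1 * i + j).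

Lemma kronecker_index_inj : injective kronecker_index.
Proof.
set K := (mmax d).+1; set m := (mmax n).+1.
pose digits (b : Basis n d) i := (\sum_(j < m) val b i j * K ^ j)%N.
have indexE b : kronecker_index b = (\sum_(i < k) digits b i * (K ^ m) ^ i)%N.
  apply: eq_bigr => i _; rewrite big_distrl /=; apply: eq_bigr => j _.
  by rewrite expnD expnM [(_ ^ i * _)%N]mulnC mulnA.
have digits_lt b i : (digits b i < K ^ m)%N by apply: sum_digits_lt => j; apply: ltn_ord.
move=> b b'; rewrite !indexE => /(sum_digits_inj (digits_lt b) (digits_lt b')) eq_digits.
apply: val_inj; apply/ffunP => i; apply/ffunP => j; apply: val_inj.
by apply: (sum_digits_inj _ _ (eq_digits i)) => j'; apply: ltn_ord.
Qed.

Lemma simple_kronecker (t : F) (b : Basis n d) :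
  simple d (fun i j => t ^+ ((mmax d).+1 ^ ((mmax n).+1 * i + j))) b
  = multinom_coef b * t ^+ kronecker_index b.
Proof.
rewrite simpleE -prodrXr; congr (_ * _); apply: eq_bigr => i _.
by rewrite -prodrXr; apply: eq_bigr => j _; rewrite -exprM mulnC.
Qed.

Definition basis_vec (b : Basis n d) : V F n d := [ffun b' => (b' == b)%:R].

Lemma basis_vec_decomp (v : V F n d) : v = \sum_(b : Basis n d) v b *: basis_vec b.
Proof.
apply/ffunP => b; rewrite sum_ffunE (bigD1 b) //= big1 => [|b' b'_neq_b].
  by rewrite !ffunE eqxx addr0 scale_regularE mulr1.
by rewrite !ffunE eq_sym (negbTE b'_neq_b) scale_regularE mulr0.
Qed.

End SimpleTensors.

(** * The rank bound *)

Section ClosedField.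
Variables (F : closedFieldType) (k : nat) (n d : 'I_k -> nat).
Local Notation coords := ('I_k -> 'I_(mmax n).+1 -> F).

Lemma chart_simple_dual_eq0 (f : Basis n d -> F) : [pchar F] =i pred0 ->
  (forall a, in_chart a -> \sum_(b : Basis n d) simple d a b * f b = 0) -> f =1 (fun=> 0).
Proof.
move=> charF0 f_simple.
pose P := \sum_(b : Basis n d) (multinom_coef F b * f b) *: 'X^(kronecker_index b).
have P0 : P = 0.
  suff /eqP : P * 'X = 0 by rewrite mulf_eq0 polyX_eq0 orbF => /eqP.
  apply: closed_poly_eq0 => t; rewrite hornerM hornerX.
  have [-> | t_neq0] := eqVneq t 0; first by rewrite mulr0.
  rewrite -[RHS](mul0r t); congr (_ * _).
  rewrite -(f_simple (fun i j => t ^+ ((mmax d).+1 ^ ((mmax n).+1 * i + j)))) => [|i].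
    rewrite horner_sum; apply: eq_bigr => b _.
    by rewrite hornerZ hornerXn simple_kronecker [LHS]mulrAC.
  exact: expf_neq0.
move=> b; have := congr1 (coefp (kronecker_index b)) P0.
rewrite /= coef0 coef_sum (bigD1 b) //= big1 => [|b' b'_neq_b].
  rewrite coefZ coefXn eqxx mulr1 addr0 => /eqP.
  by rewrite mulf_eq0 (negbTE (multinom_coef_neq0 _ charF0)) => /eqP.
rewrite coefZ coefXn; case: eqP => [/kronecker_index_inj b'_eq|]; last by rewrite mulr0.
by rewrite b'_eq eqxx in b'_neq_b.
Qed.

Variables (p q : nat) (phi : {linear V F n d -> 'M[F]_(p, q)}).

Lemma chart_simple_form_eq0 (u : 'rV[F]_p) (w : 'rV[F]_q) : [pchar F] =i pred0 ->
  (forall a, in_chart a -> u *m phi (simple d a) *m w^T = 0) ->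
  forall v, u *m phi v *m w^T = 0.
Proof.
move=> charF0 uw_simple; pose f b := (u *m phi (basis_vec F b) *m w^T) 0 0.
have formE v : (u *m phi v *m w^T) 0 0 = \sum_b v b * f b.
  rewrite {1}(basis_vec_decomp v) linear_sum mulmx_sumr mulmx_suml summxE.
  by apply: eq_bigr => b _; rewrite linearZ /= -scalemxAr -scalemxAl mxE.
have f0 : f =1 (fun=> 0).
  by apply: chart_simple_dual_eq0 charF0 _ => a a_chart; rewrite -formE uw_simple // mxE.
move=> v; apply/matrixP => i j; rewrite !ord1 formE mxE.
by rewrite big1 // => b _; rewrite f0 mulr0.
Qed.

Definition line_poly (a s : coords) : 'M[{poly F}]_(p, q) :=
  \sum_(g : Expo n d) 'X^(expo_deg g) *: map_mx polyC (phi (expo_eval s g *: simple_taylor a g)).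

Lemma horner_line_poly (a s : coords) t :
  map_mx (horner_eval t) (line_poly a s) = phi (simple d (fun i j => a i j + t * s i j)).
Proof.
rewrite simple_line linear_sum; apply/matrixP => i j.
rewrite mxE horner_evalE !summxE horner_sum; apply: eq_bigr => g _.
by rewrite !linearZ !mxE hornerM hornerXn hornerC mulrA.
Qed.

Lemma coef_line_poly (a s : coords) x y (X : 'M[F]_(x, p)) (Y : 'M[F]_(q, y)) c1 c2 e :
  (forall i, s i (inord (n i)) = 0) ->
  ((map_mx polyC X *m line_poly a s *m map_mx polyC Y) c1 c2)`_e =
  \sum_(g | dehom_expo g && (expo_deg g == e))
     expo_eval s g * (X *m phi (simple_taylor a g) *m Y) c1 c2.
Proof.
move=> s_last; rewrite /line_poly mulmx_sumr mulmx_suml summxE coef_sum.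
rewrite (bigID (@dehom_expo _ n d)) /= [X in _ + X]big1 ?addr0 => [|g /negbTE g_nd]; last first.
  by rewrite simple_taylor_eq0 ?g_nd // linear0 map_mx0 scaler0 mulmx0 mul0mx mxE coef0.
rewrite [RHS]big_mkcondr /=; apply: eq_bigr => g _.
rewrite -scalemxAr -scalemxAl -!map_mxM linearZ /= -scalemxAr -scalemxAl.
rewrite [(_ *: (_ : 'M_(_, _))) _ _]mxE [map_mx _ _ _ _]mxE.
rewrite [(_ *: (_ : 'M_(_, _))) _ _]mxE coefMC coefXn eq_sym.
by case: eqP; rewrite ?mul1r ?mul0r.
Qed.

Lemma line_form_eq0 (a0 s : coords) r (L : 'M[F]_(r, p)) (R : 'M[F]_(q, r))
    (u : 'rV[F]_p) (w : 'rV[F]_q) (m : nat) :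
  (forall a, \rank (phi (simple d a)) <= r)%N ->
  \det (L *m phi (simple d a0) *m R) != 0 ->
  (forall i, s i (inord (n i)) = 0) ->
  (forall g, dehom_expo g -> (expo_deg g <= m)%N ->
     u *m phi (simple_taylor a0 g) *m R = 0) ->
  (forall g, dehom_expo g -> (expo_deg g + m.+1 <= dsum d)%N ->
     L *m phi (simple_taylor a0 g) *m w^T = 0) ->
  u *m phi (simple d (fun i j => a0 i j + s i j)) *m w^T = 0.
Proof.
move=> rk_simple detC0 s_last u_low w_high; set P := line_poly a0 s.
have ev t m1 m2 (X : 'M[F]_(m1, p)) (Y : 'M[F]_(q, m2)) :
    map_mx (horner_eval t) (map_mx polyC X *m P *m map_mx polyC Y)
    = X *m phi (simple d (fun i j => a0 i j + t * s i j)) *m Y.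
  by rewrite !map_mxM !map_mx_hornerC horner_line_poly.
pose C := map_mx polyC L *m P *m map_mx polyC R.
have C0 : (\det C).[0] != 0.
  rewrite -horner_evalE -det_map_mx ev (eq_simple d (a' := a0)) // => i j.
  by rewrite mul0r addr0.
have detC : \det C != 0 by apply: contraNneq C0 => ->; rewrite horner0.
have u_lowP (c : 'I_r) : 'X^(m.+1) %| (map_mx polyC u *m P *m map_mx polyC R) 0 c.
  apply: dvdp_Xn_coef0 => e e_lt; rewrite coef_line_poly // big1 // => g /andP [g_nd /eqP g_e].
  by rewrite u_low ?mxE ?mulr0 // g_e -ltnS.
have w_highP (c : 'I_r) : 'X^(dsum d - m) %| (map_mx polyC L *m P *m map_mx polyC w^T) c 0.
  apply: dvdp_Xn_coef0 => e e_lt; rewrite coef_line_poly // big1 // => g /andP [g_nd /eqP g_e].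
  by rewrite w_high ?mxE ?mulr0 // g_e; lia.
pose form := (map_mx polyC u *m P *m map_mx polyC w^T) 0 0.
have dvd_form : 'X^((dsum d).+1) %| \det C * form.
  have -> : \det C * form = (\det C *: (map_mx polyC u *m P *m map_mx polyC w^T)) 0 0.
    by rewrite mxE.
  rewrite mxrank_leq_adj_factor_poly => [|t|//]; last by rewrite horner_line_poly.
  rewrite mxE; apply: dvdp_sum => c _; rewrite mxE big_distrl /=; apply: dvdp_sum => c' _.
  apply: dvdp_trans (dvdp_mul (dvdp_mulr _ (u_lowP c')) (w_highP c)).
  by rewrite -exprD dvdp_exp2l //; lia.
have size_form : (size form <= (dsum d).+1)%N.
  apply/leq_sizeP => e e_gt; rewrite coef_line_poly // big1 // => g /andP [g_nd /eqP g_e].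
  by have := dehom_expo_deg g_nd; rewrite g_e; lia.
have form0 : form = 0 by apply: dvdp_Xn_mul_eq0 C0 dvd_form size_form.
rewrite (eq_simple d (a' := fun i j => a0 i j + 1 * s i j)) => [|i j]; last by rewrite mul1r.
apply/matrixP => i j; rewrite !ord1 -ev [map_mx _ _ _ _]mxE -/form form0.
by rewrite horner_evalE horner0 mxE.
Qed.

Lemma exists_chart_minor r (L : 'M[F]_(r, p)) (R : 'M[F]_(q, r)) (a1 : coords) :
  \det (L *m phi (simple d a1) *m R) != 0 ->
  exists2 a0 : coords, in_chart a0 & \det (L *m phi (simple d a0) *m R) != 0.
Proof.
move=> det_a1; pose e i (j : 'I_(mmax n).+1) : F := (j == inord (n i))%:R.
pose D := \det (map_mx polyC L *m line_poly a1 e *m map_mx polyC R).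
have DE t : D.[t] = \det (L *m phi (simple d (fun i j => a1 i j + t * e i j)) *m R).
  by rewrite -horner_evalE -det_map_mx !map_mxM !map_mx_hornerC horner_line_poly.
have D0 : D.[0] = \det (L *m phi (simple d a1) *m R).
  by rewrite DE (eq_simple d (a' := a1)) // => i j; rewrite mul0r addr0.
pose Q := D * \prod_(i < k) ('X - (- a1 i (inord (n i)))%:P).
have Q_neq0 : Q != 0.
  rewrite mulf_neq0 //; first by apply: contraNneq det_a1 => D_eq0; rewrite -D0 D_eq0 horner0.
  by rewrite prodf_seq_neq0; apply/allP => i _ /=; rewrite polyXsubC_eq0.
have /closed_nonrootP [t] := Q_neq0.
rewrite /root hornerM horner_prod mulf_eq0 negb_or => /andP [Dt_neq0 prod_neq0].
exists (fun i j => a1 i j + t * e i j) => [i|]; last by rewrite -DE.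
move: prod_neq0; rewrite prodf_seq_neq0 => /allP /(_ i (mem_index_enum _)) /=.
by rewrite hornerXsubC opprK /e eqxx mulr1 addrC.
Qed.

Definition low_span r (R : 'M[F]_(q, r)) (a0 : coords) (m : nat) :=
  (\sum_(g | dehom_expo g && (expo_deg g <= m)%N) <<(phi (simple_taylor a0 g) *m R)^T>>)%MS.

Definition high_span r (L : 'M[F]_(r, p)) (a0 : coords) (m : nat) :=
  (\sum_(g | dehom_expo g && (expo_deg g + m.+1 <= dsum d)%N)
     <<L *m phi (simple_taylor a0 g)>>)%MS.

Lemma rank_low_span r (R : 'M[F]_(q, r)) a0 m :
  (\rank (low_span R a0 m) <= monoCount n d (fun t => t <= m) * r)%N.
Proof.
apply: leq_trans (mxrank_sum_leq _ _) _.
rewrite monoCountE cardsE -sum_nat_const; apply: leq_sum => g _.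
by rewrite mxrank_tr rank_leq_col.
Qed.

Lemma rank_high_span r (L : 'M[F]_(r, p)) a0 m :
  (\rank (high_span L a0 m) <= monoCount n d (fun t => t + m.+1 <= dsum d) * r)%N.
Proof.
apply: leq_trans (mxrank_sum_leq _ _) _.
rewrite monoCountE cardsE -sum_nat_const; apply: leq_sum => g _.
exact: rank_leq_row.
Qed.

Lemma mxrank_leq_spans r (L : 'M[F]_(r, p)) (R : 'M[F]_(q, r)) (a0 : coords) m v :
  [pchar F] =i pred0 -> (forall a, \rank (phi (simple d a)) <= r)%N ->
  in_chart a0 -> \det (L *m phi (simple d a0) *m R) != 0 ->
  (\rank (phi v) <= \rank (low_span R a0 m) + \rank (high_span L a0 m))%N.
Proof.
move=> charF0 rk_simple a0_chart det_a0.
apply: mxrank_leq_add_of_orthogonal => u w u_perp w_perp.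
apply: chart_simple_form_eq0 charF0 _ _ => a a_chart.
have [c [s s_last ->]] := simple_affine_rescale d a_chart a0_chart.
rewrite linearZ /= -scalemxAr -scalemxAl (line_form_eq0 (m := m) rk_simple det_a0 s_last).
- by rewrite scaler0.
- move=> g g_nd g_low; rewrite -mulmxA -[phi _ *m R]trmxK.
  apply: (submx_orth u_perp); apply: (sumsmx_sup g); first by rewrite g_nd g_low.
  by rewrite genmxE.
- move=> g g_nd g_high; apply: trmx_inj; rewrite trmx0 trmx_mul trmxK.
  apply: (submx_orth w_perp); apply: (sumsmx_sup g); first by rewrite g_nd g_high.
  by rewrite genmxE.
Qed.

End ClosedField.

Local Close Scope ring_scope.
Unset Implicit Arguments.

Theorem theorem8p4 (F : closedFieldType) (hF : [pchar F]%R =i pred0)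
  (k : nat) (n d : 'I_k -> nat)
  (hn : forall i, 0 < n i) (hd : forall i, 0 < d i)
  (p q : nat) (phi : {linear V F n d -> 'M[F]_(p, q)})
  (hphi : exists v, phi v != 0%R) :
  (Pot phi <= ((Ynd n d + Znd n d)%:R : rat))%R.
Proof.
pose r := mu phi (@Sset F k n d).
have rk_simple a : \rank (phi (simple d a)) <= r by apply: mu_ge_rank; exists a.
have [_ [a1 ->] rk_a1] : exists2 x, Sset x & \rank (phi x) = r.
  by apply: mu_attained; exists (simple d (fun _ _ => 0%R)), (fun _ _ => 0%R).
have [L [R LR1]] := exists_mxrank_id rk_a1.
have det_a1 : (\det (L *m phi (simple d a1) *m R) != 0)%R by rewrite LR1 det1 oner_neq0.
have [a0 a0_chart det_a0] := exists_chart_minor det_a1.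
rewrite /Pot -/r; have [v _ <-] : exists2 v, True & \rank (phi v) = mu phi (fun _ => True).
  by apply: mu_attained; exists 0%R.
have rk_v := mxrank_leq_spans ((dsum d)./2) v hF rk_simple a0_chart det_a0.
have [-> | r_gt0] := posnP r; first by rewrite invr0 mulr0.
rewrite ler_pdivrMr ?ltr0n // -natrM ler_nat mulnDl (leq_trans rk_v) //.
exact: leq_add (rank_low_span _ _ _ _) (rank_high_span _ _ _ _).
Qed.
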